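(* Let $L$ be a finite distributive lattice and let $m$ be the maximum size of an antichain in $\operatorname{Mi}(L)$. Then for every $k\ge0$, $$q_k(L)=\sum_{j=k}^m\binom jk d_j^-(L),\qquad d_k^-(L)=\sum_{j=k}^m(-1)^{j-k}\binom jk q_j(L).$$
   Context: $\operatorname{Mi}(L)$ is the set of meet-irreducible elements of $L$, as a poset under the order of $L$. For a finite lattice $M$ and $k\ge0$, $q_k(M)$ is the number of convex sublattices (intervals) of $M$ isomorphic to the Boolean lattice $\mathbf{B}_k$ with $2^k$ elements. For $a\in M$, $\deg^-_M(a)$ is the number of elements of $M$ covering $a$, and $d_k^-(M)$ is the number of $a\in M$ with $\deg^-_M(a)=k$. *)

From mathcomp Require Import all_boot all_order all_algebra.
Set Implicit Arguments. Unset Strict Implicit. Unset Printing Implicit Defensive.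
Import Order.Theory.
Local Open Scope order_scope.

Section Defs.
Context {disp : Order.disp_t} {L : finTBDistrLatticeType disp}.

Definition covers (a b : L) : bool :=
  (a < b) && [forall c : L, ~~ ((a < c) && (c < b))].

Definition deg_down (a : L) : nat := #|[set b : L | covers a b]|.

Definition d_down (k : nat) : nat := #|[set a : L | deg_down a == k]|.

Definition meet_irr (a : L) : bool :=
  (a != \top) && [forall b : L, forall c : L, (a == b `&` c) ==> ((a == b) || (a == c))].

Definition Mi : {set L} := [set a : L | meet_irr a].

Definition antichain (A : {set L}) : bool :=
  [forall x in A, forall y in A, (x != y) ==> ~~ ((x <= y) || (y <= x))].

Definition max_antichain_Mi : nat :=
  \max_(A : {set L} | (A \subset Mi) && antichain A) #|A|.

(* the interval [a,b] is order-isomorphic to the Boolean lattice B_k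
   (subsets of a k-element set ordered by inclusion) *)
Definition interval_boolean (k : nat) (a b : L) : bool :=
  (a <= b) &&
  [exists f : {ffun {set 'I_k} -> L},
     [&& [forall S, (a <= f S) && (f S <= b)],
         [forall x : L, ((a <= x) && (x <= b)) ==> [exists S, f S == x]] &
         [forall S, forall S', (f S <= f S') == (S \subset S')]]].

Definition q_bool (k : nat) : nat :=
  #|[set p : L * L | interval_boolean k p.1 p.2]|.

End Defs.

(* In a distributive lattice the upper covers of an element [a] are independent:
   for every set [S] of upper covers of [a], [T |-> a `|` \join T] is an order
   isomorphism from the subsets of [S] onto the interval [a, a `|` \join S], and a
   Boolean interval [a, b] arises in this way from the set of covers of [a] below
   [b].  Hence [q_k(L) = \sum_a 'C(deg^- a, k)], which regroups into the first
   identity; the second one follows by binomial inversion, i.e. from the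
   orthogonality [\sum_j (-1)^(j-k) 'C(j, k) 'C(n, j) = (n == k)].  The sums may stop at
   [m] because [deg^- a <= m]: for every upper cover [c] of [a], the largest
   element above [a] and not above [c] is meet-irreducible, and these elements
   form an antichain. *)

From mathcomp Require Import all_boot all_order all_algebra ring.
Set Implicit Arguments. Unset Strict Implicit. Unset Printing Implicit Defensive.
Import GRing.Theory.

Lemma mul_bin_nested n j k : k <= j <= n ->
  'C(j, k) * 'C(n, j) = 'C(n, k) * 'C(n - k, j - k).
Proof.
case/andP=> kj jn; have kn := leq_trans kj jn.
have nkj : n - k - (j - k) = n - j by rewrite subnBA // subnK.
have fj := bin_fact kj; have fn := bin_fact jn; have fk := bin_fact kn.
have fnk := bin_fact (leq_sub2r k jn); rewrite nkj in fnk.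
apply/eqP; rewrite -(eqn_pmul2r (_ : 0 < k`! * (j - k)`! * (n - j)`!)); last first.
  by rewrite !muln_gt0 !fact_gt0.
apply/eqP; transitivity n`!; first by rewrite -fn -fj; ring.
by rewrite -fk -fnk; ring.
Qed.

Local Open Scope ring_scope.

Lemma sum_alt_bin n : \sum_(i < n.+1) (-1) ^+ i * ('C(n, i))%:Z = (n == 0)%:Z.
Proof.
have := exprDn 1 (-1 : int) n; rewrite addrN expr0n natz => ->.
by apply: eq_bigr => i _; rewrite expr1n mul1r pmulrn mulrzz.
Qed.

Lemma binomial_orthogonality k m n : (n <= m)%N ->
  \sum_(k <= j < m.+1) (-1) ^+ (j - k) * ('C(j, k))%:Z * ('C(n, j))%:Z = (n == k)%:Z.
Proof.
move=> nm; have [nk | kn] := ltnP n k.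
  rewrite (ltn_eqF nk); apply: big1_seq => j /andP[_]; rewrite mem_index_iota.
  case/andP=> kj _; rewrite (@bin_small n j) ?mulr0 //; exact: leq_trans nk kj.
rewrite (@big_cat_nat _ _ _ n.+1) //=; last exact: leqW.
rewrite [X in _ + X]big1_seq ?addr0; last first.
  move=> j /andP[_]; rewrite mem_index_iota => /andP[nj _].
  by rewrite (@bin_small n j) // mulr0.
rewrite -{1}(add0n k) big_addn subSn // big_mkord.
transitivity (\sum_(i < (n - k).+1) ('C(n, k))%:Z * ((-1) ^+ i * ('C(n - k, i))%:Z)).
  apply: eq_bigr => -[i /= lt_i_nk] _.
  rewrite addnK -mulrA -PoszM mul_bin_nested ?leq_addl ?addnK //; last first.
    by rewrite /= addnC -leq_subRL // -ltnS.
  by rewrite PoszM mulrCA.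
rewrite -mulr_sumr sum_alt_bin subn_eq0.
have [-> | nk] := eqVneq n k; first by rewrite leqnn binn.
by rewrite leqNgt ltn_neqAle eq_sym nk kn mulr0.
Qed.

Local Close Scope ring_scope.

Section DistributiveLattice.
Context {disp : Order.disp_t} {L : finTBDistrLatticeType disp}.
Import Order.Theory.
Local Open Scope order_scope.
Implicit Types (a b c x y : L) (S : {set L}).

Lemma covers_lt a c : covers a c -> a < c.
Proof. by case/andP. Qed.

Lemma covers_eq a c x : covers a c -> a < x -> x <= c -> x = c.
Proof.
case/andP=> _ /forallP/(_ x); rewrite negb_and => /orP[/negP // | xc] ax.
by rewrite le_eqVlt (negbTE xc) orbF => /eqP.
Qed.

Lemma meet_covers a c x : covers a c -> a <= x -> c `&` x = if c <= x then c else a.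
Proof.
move=> ac ax; case: ifPn => [/meet_idPl // | cx].
have a_cx : a <= c `&` x by rewrite lexI (ltW (covers_lt ac)) ax.
move: a_cx; rewrite le_eqVlt => /orP[/eqP <- // | /(covers_eq ac)/(_ (leIl c x)) cxc].
by move: cx; rewrite -cxc leIr.
Qed.

Lemma meet_joinsr (I : finType) (P : {pred I}) (F : I -> L) x :
  x `&` \join_(i | P i) F i = \join_(i | P i) (x `&` F i).
Proof. by apply: big_endo; [exact: meetUr | exact: meetx0]. Qed.

Definition upper_covers a : {set L} := [set c | covers a c].

Lemma subset_upper_covers a S s : S \subset upper_covers a -> s \in S -> covers a s.
Proof. by move/subsetP=> Scov /Scov; rewrite inE. Qed.

Definition cover_join a S := a `|` \join_(s in S) s.

Lemma le_cover_join a S : a <= cover_join a S.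
Proof. exact: leUl. Qed.

Lemma cover_join_sup a S s : s \in S -> s <= cover_join a S.
Proof. by move=> sS; apply: le_trans (leUr _ _); exact: joins_sup. Qed.

Lemma cover_join_subset a S S' : S \subset S' -> cover_join a S <= cover_join a S'.
Proof. by move=> sSS'; rewrite leU2 // le_joins. Qed.

Lemma cover_join_le a S x : a <= x -> {in S, forall s, s <= x} -> cover_join a S <= x.
Proof. by move=> ax Sx; rewrite leUx ax; apply/joinsP. Qed.

Lemma meet_cover_join a x S : a <= x -> S \subset upper_covers a ->
  x `&` cover_join a S = cover_join a [set s in S | s <= x].
Proof.
move=> ax Scov; apply/le_anti/andP; split; last first.
  rewrite lexI cover_join_subset ?andbT; last by apply/subsetP => s; rewrite inE => /andP[].
  by apply: cover_join_le => // s; rewrite inE => /andP[].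
rewrite meetUr (meet_idPr ax) meet_joinsr leUx le_cover_join; apply/joinsP => s sS.
rewrite meetC (meet_covers (subset_upper_covers Scov sS) ax).
case: ifP => sx; last exact: le_cover_join.
by apply: cover_join_sup; rewrite inE sS sx.
Qed.

Lemma mem_cover_join a c S : covers a c -> S \subset upper_covers a ->
  c <= cover_join a S -> c \in S.
Proof.
move=> ac Scov cJ; apply: contraT => cNS.
have noS : [set s in S | s <= c] = set0.
  apply/setP => s; rewrite !inE; apply/andP => -[sS sc].
  have cov_s := subset_upper_covers Scov sS.
  by move: cNS; rewrite -(covers_eq ac (covers_lt cov_s) sc) sS.
have := meet_cover_join (ltW (covers_lt ac)) Scov.
rewrite (meet_idPl cJ) noS /cover_join big_set0 joinx0 => ca.
by move: (covers_lt ac); rewrite ca ltxx.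
Qed.

Lemma le_cover_join2 a S S' : S \subset upper_covers a -> S' \subset upper_covers a ->
  (cover_join a S <= cover_join a S') = (S \subset S').
Proof.
move=> Scov S'cov; apply/idP/idP => [le_SS' | /cover_join_subset //].
apply/subsetP => s sS; apply: mem_cover_join (subset_upper_covers Scov sS) S'cov _.
exact: le_trans (cover_join_sup a sS) le_SS'.
Qed.

Lemma interval_boolean_cover_join a S : S \subset upper_covers a ->
  interval_boolean #|S| a (cover_join a S).
Proof.
move=> Scov; rewrite /interval_boolean le_cover_join /=.
pose e (i : 'I_#|S|) := enum_val i.
have eScov (T : {set 'I_#|S|}) : e @: T \subset upper_covers a.
  by apply/subsetP => _ /imsetP[i _ ->]; exact: subsetP Scov _ (enum_valP i).
apply/existsP; exists [ffun T : {set 'I_#|S|} => cover_join a (e @: T)]; apply/and3P; split.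
- apply/forallP => T; rewrite ffunE le_cover_join cover_join_subset //.
  by apply/subsetP => _ /imsetP[i _ ->]; exact: enum_valP.
- apply/forallP => x; apply/implyP => /andP[ax xJ]; apply/existsP.
  exists [set i | e i <= x]; rewrite ffunE -[x in _ == x](meet_idPl xJ).
  rewrite (meet_cover_join ax Scov); apply/eqP; congr cover_join.
  apply/setP => s; rewrite inE; apply/imsetP/andP => [[i] | [sS sx]].
    by rewrite inE => ix ->; split; first exact: enum_valP.
  by exists (enum_rank_in sS s); rewrite ?inE /e enum_rankK_in.
- apply/forallP => T; apply/forallP => T'; rewrite !ffunE le_cover_join2 //.
  apply/eqP; apply/idP/idP => [/subsetP eTT' | /imsetS //].
  apply/subsetP => i /(imset_f e)/eTT'.
  by rewrite mem_imset //; exact: enum_val_inj.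
Qed.

Section BooleanInterval.
Variables (k : nat) (a b : L) (f : {set 'I_k} -> L).
Hypotheses (f_range : forall T, a <= f T <= b)
  (f_onto : forall x, a <= x -> x <= b -> exists T, x = f T)
  (f_le : forall T T', (f T <= f T') = (T \subset T')).

Let f_inj : injective f.
Proof. by move=> T T' eTT'; apply/eqP; rewrite eqEsubset -!f_le eTT' lexx. Qed.

Let le_ab : a <= b.
Proof. by case/andP: (f_range set0); exact: le_trans. Qed.

Let f_set0 : f set0 = a.
Proof.
have [T eT] := f_onto (lexx a) le_ab; rewrite eT; apply/le_anti.
by rewrite f_le sub0set -eT; case/andP: (f_range set0).
Qed.

Let f_setT : f setT = b.
Proof.
have [T eT] := f_onto le_ab (lexx b); rewrite eT; apply/le_anti.
by rewrite andbC f_le subsetT -eT; case/andP: (f_range setT).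
Qed.

Let lt_f_set1 i : a < f [set i].
Proof.
rewrite -f_set0 lt_neqAle f_le sub0set andbT (inj_eq f_inj).
by apply/eqP => /setP/(_ i); rewrite !inE eqxx.
Qed.

Lemma covers_boolean_interval :
  [set c in upper_covers a | c <= b] = [set f [set i] | i : 'I_k].
Proof.
apply/setP => c; rewrite !inE; apply/andP/imsetP => [[ac cb] | [i _ ->]].
  have [T eT] := f_onto (ltW (covers_lt ac)) cb.
  have /set0Pn[i iT] : T != set0.
    by apply: contraTneq (covers_lt ac) => T0; rewrite eT T0 f_set0 ltxx.
  exists i => //; apply/esym/(covers_eq ac (lt_f_set1 i)).
  by rewrite eT f_le sub1set.
split; last by case/andP: (f_range [set i]).
apply/andP; split; first exact: lt_f_set1.
apply/forallP => x; apply/andP => -[ax xi].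
have [T eT] := f_onto (ltW ax) (le_trans (ltW xi) (proj2 (andP (f_range _)))).
move: ax xi; rewrite eT -f_set0 !lt_neqAle !f_le !(inj_eq f_inj) => /andP[T0 _] /andP[Ti].
by rewrite subset1 (negbTE Ti) eq_sym (negbTE T0).
Qed.

Lemma boolean_interval_covers :
  #|[set c in upper_covers a | c <= b]| = k /\
  cover_join a [set c in upper_covers a | c <= b] = b.
Proof.
rewrite covers_boolean_interval; split.
  by rewrite card_imset ?card_ord // => i j /f_inj/set1_inj.
have Jb : cover_join a [set f [set i] | i : 'I_k] <= b.
  by apply: cover_join_le => // _ /imsetP[i _ ->]; case/andP: (f_range [set i]).
have [T eT] := f_onto (le_cover_join _ _) Jb.
apply/le_anti; rewrite Jb -f_setT eT f_le /=; apply/subsetP => i _.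
by rewrite -sub1set -f_le -eT; apply: cover_join_sup; exact: imset_f.
Qed.

End BooleanInterval.

Lemma interval_boolean_covers k a b : interval_boolean k a b ->
  #|[set c in upper_covers a | c <= b]| = k /\
  cover_join a [set c in upper_covers a | c <= b] = b.
Proof.
case/andP=> _ /existsP[f /and3P[/forallP f_range /forallP f_onto f_le]].
apply: (@boolean_interval_covers k a b f) => // [x ax xb | T T'].
  by have /existsP[T /eqP <-] := implyP (f_onto x) (introT andP (conj ax xb)); exists T.
by apply/eqP; move/forallP: f_le => /(_ T)/forallP/(_ T').
Qed.

Lemma card_interval_boolean k a :
  #|[set b | interval_boolean k a b]| = 'C(deg_down a, k).
Proof.
have -> : [set b | interval_boolean k a b] =
    cover_join a @: [set S : {set L} | S \subset upper_covers a & #|S| == k].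
  apply/setP => b; rewrite inE; apply/idP/imsetP => [kab | [S]].
    have [card_k Jb] := interval_boolean_covers kab.
    exists [set c in upper_covers a | c <= b] => //.
    rewrite inE card_k eqxx andbT.
    by apply/subsetP => c; rewrite inE => /andP[].
  by rewrite inE => /andP[Scov /eqP <-] ->; exact: interval_boolean_cover_join.
rewrite card_in_imset ?cards_draws // => S S'.
rewrite !inE => /andP[Scov _] /andP[S'cov _] eJ.
apply/eqP; rewrite eqEsubset -(le_cover_join2 Scov S'cov).
by rewrite -(le_cover_join2 S'cov Scov) eJ lexx.
Qed.

Lemma q_bool_sum k : @q_bool _ L k = \sum_(a : L) 'C(deg_down a, k).
Proof.
under eq_bigr do rewrite -card_interval_boolean -sum1_card.
rewrite pair_big_dep /q_bool -sum1_card; apply: eq_bigl => p.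
by rewrite !inE.
Qed.

Definition max_avoiding a c := \join_(x | (a <= x) && ~~ (c <= x)) x.

Lemma max_avoiding_max a c y : a <= y -> ~~ (c <= y) -> y <= max_avoiding a c.
Proof. by move=> ay cy; apply: joins_sup; rewrite ay. Qed.

Section MaxAvoiding.
Variables (a c : L).
Hypothesis ac : covers a c.

Lemma le_max_avoiding : a <= max_avoiding a c.
Proof. by apply: max_avoiding_max; rewrite ?(lt_geF (covers_lt ac)). Qed.

Lemma max_avoiding_avoids : ~~ (c <= max_avoiding a c).
Proof.
apply/negP => cM; suff : c <= a by rewrite (lt_geF (covers_lt ac)).
rewrite -(meet_idPl cM) meet_joinsr; apply/joinsP => x /andP[ax cx].
by rewrite (meet_covers ac ax) (negbTE cx).
Qed.

Lemma max_avoiding_succ y : max_avoiding a c < y -> c <= y.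
Proof.
move=> My; apply/negPn/negP => cy.
have := max_avoiding_max (le_trans le_max_avoiding (ltW My)) cy.
by rewrite lt_geF.
Qed.

Lemma meet_irr_max_avoiding : meet_irr (max_avoiding a c).
Proof.
apply/andP; split.
  by apply: contraNneq max_avoiding_avoids => ->; rewrite lex1.
apply/forallP => x; apply/forallP => y; apply/implyP => /eqP Mxy.
apply/negPn/negP; rewrite negb_or => /andP[Mx My].
have lt_Mx : max_avoiding a c < x by rewrite lt_neqAle Mx Mxy leIl.
have lt_My : max_avoiding a c < y by rewrite lt_neqAle My Mxy leIr.
move: max_avoiding_avoids.
by rewrite Mxy lexI (max_avoiding_succ lt_Mx) (max_avoiding_succ lt_My).
Qed.

Lemma le_max_avoiding_cover c' : covers a c' -> c != c' -> c' <= max_avoiding a c.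
Proof.
move=> ac' cc'; apply: max_avoiding_max; first exact/ltW/covers_lt.
by apply: contra cc' => cc'_le; rewrite (covers_eq ac' (covers_lt ac) cc'_le).
Qed.

End MaxAvoiding.

Lemma max_avoiding_le_eq a c c' : covers a c -> covers a c' ->
  max_avoiding a c <= max_avoiding a c' -> c = c'.
Proof.
move=> ac ac' le_MM'; apply/eqP/negP => /negP cc'.
have := le_trans (le_max_avoiding_cover ac ac' cc') le_MM'.
by rewrite (negbTE (max_avoiding_avoids ac')).
Qed.

Lemma deg_down_le a : (deg_down a <= @max_antichain_Mi _ L)%N.
Proof.
pose A := max_avoiding a @: upper_covers a.
have ->: deg_down a = #|A|.
  rewrite card_in_imset // => c c'; rewrite !inE => ac ac' eM.
  by apply: max_avoiding_le_eq ac ac' _; rewrite eM.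
rewrite /max_antichain_Mi; apply: leq_bigmax_cond.
apply/andP; split.
  apply/subsetP => _ /imsetP[c ac ->]; rewrite inE in ac; rewrite /Mi inE.
  exact: meet_irr_max_avoiding.
apply/forall_inP => _ /imsetP[c ac ->]; apply/forall_inP => _ /imsetP[c' ac' ->].
rewrite !inE in ac ac'; apply/implyP => Mcc'.
by rewrite negb_or; apply/andP; split; apply: contra Mcc';
  [move/(max_avoiding_le_eq ac ac') | move/(max_avoiding_le_eq ac' ac)] => ->.
Qed.

Lemma d_down_sum j : @d_down _ L j = \sum_(a : L) (deg_down a == j).
Proof.
rewrite /d_down -sum1_card big_mkcond; apply: eq_bigr => a _.
by rewrite inE; case: (deg_down a == j).
Qed.

End DistributiveLattice.

Lemma q_bool_binomial_sum disp (L : finTBDistrLatticeType disp) k m :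
  (forall a : L, deg_down a <= m) ->
  @q_bool disp L k = \sum_(k <= j < m.+1) 'C(j, k) * @d_down disp L j.
Proof.
move=> deg_le_m; rewrite q_bool_sum.
under [RHS]eq_bigr do rewrite d_down_sum big_distrr.
rewrite exchange_big; apply: eq_bigr => a _.
transitivity (\sum_(k <= j < m.+1 | j == deg_down a) 'C(j, k)); last first.
  rewrite big_mkcond; apply: eq_bigr => j _.
  by rewrite eq_sym; case: (deg_down a == j); rewrite /= ?muln0 ?muln1.
rewrite big_nat1_eq ltnS deg_le_m andbT.
by case: leqP => // /bin_small.
Qed.

Local Open Scope ring_scope.

Lemma d_down_alternating_sum disp (L : finTBDistrLatticeType disp) k m :
  (forall a : L, (deg_down a <= m)%N) ->
  (@d_down disp L k)%:Z =
    \sum_(k <= j < m.+1) (-1) ^+ (j - k) * ('C(j, k))%:Z * (@q_bool disp L j)%:Z.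
Proof.
move=> deg_le_m.
have q_bool_sumz j : (@q_bool disp L j)%:Z = \sum_(a : L) ('C(deg_down a, j))%:Z.
  by rewrite q_bool_sum; apply: (big_morph Posz PoszD).
under [RHS]eq_bigr do rewrite q_bool_sumz mulr_sumr.
rewrite exchange_big /=.
under [RHS]eq_bigr do rewrite (binomial_orthogonality k (deg_le_m _)).
by rewrite d_down_sum; apply: (big_morph Posz PoszD).
Qed.

Theorem proposition2 (disp : Order.disp_t) (L : finTBDistrLatticeType disp) (k : nat) :
  let m := @max_antichain_Mi disp L in
  @q_bool disp L k = \sum_(k <= j < m.+1) 'C(j, k) * @d_down disp L j
  /\
  ((@d_down disp L k)%:Z =
     \sum_(k <= j < m.+1) (-1) ^+ (j - k) * ('C(j, k))%:Z * (@q_bool disp L j)%:Z)%R.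
Proof.
by split; [apply: q_bool_binomial_sum | apply: d_down_alternating_sum];
  exact: deg_down_le.
Qed.
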